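(* Let $\gamma\in\{\tfrac12,1,\dots\}$ and $j\in\{-\tfrac12,0,\tfrac12,\dots\}$ with $j\le\gamma-1$. Let $V_{j+1+\gamma}\subseteq F_\gamma\otimes D^+_j$ be the span of $|\gamma,\mu\rangle\otimes|j,j+1+\gamma-\mu\rangle$, $\mu\in\{-\gamma,\dots,\gamma\}$. Then the restriction of the Casimir $Q$ to $V_{j+1+\gamma}$ is not diagonalisable; consequently $Q$ is not diagonalisable on $F_\gamma\otimes D^+_j$.
   Context: Let $\mathfrak{spin}(2,1)_{\mathbb C}$ have basis $J_0,J_+,J_-$ with $[J_0,J_\pm]=\pm J_\pm$, $[J_+,J_-]=-2J_0$, and Casimir $Q=-J_0(J_0-1)+J_+J_-$. Set $\Gamma_\pm(j,m)=\mathrm i\sqrt{j\mp m}\,\sqrt{j\pm m+1}$. A module with basis $\{|j,m\rangle\}$ has action $J_0|j,m\rangle=m|j,m\rangle$, $J_\pm|j,m\rangle=\Gamma_\pm(j,m)|j,m\pm1\rangle$. The positive discrete series module $D^+_j$ has basis $|j,m\rangle$, $m\in\{j+1,j+2,\dots\}$; the finite-dimensional module $F_\gamma$ has basis $|\gamma,\mu\rangle$, $\mu\in\{-\gamma,\dots,\gamma\}$. On a tensor product the generators act as $J_0\otimes1+1\otimes J_0$, $J_\pm\otimes1+1\otimes J_\pm$. *)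

From HB Require Import structures.
From mathcomp Require Import all_boot all_order all_algebra all_field.
Set Implicit Arguments. Unset Strict Implicit. Unset Printing Implicit Defensive.
Import Order.TTheory GRing.Theory Num.Theory.
Local Open Scope ring_scope.

(* Half-integer parameters: gamma = g/2 (g : nat), j = (k-1)/2 (k : nat). *)
Definition gam (g : nat) : algC := g%:R / 2.
Definition jj (k : nat) : algC := (k%:R - 1) / 2.

Definition Gp (j m : algC) : algC := 'i * sqrtC (j - m) * sqrtC (j + m + 1).
Definition Gm (j m : algC) : algC := 'i * sqrtC (j + m) * sqrtC (j - m + 1).

(* Basis |gamma,mu_a> (x) |j,m_n> of F_gamma (x) D^+_j, a <= g, n : nat *)
Definition mu (g a : nat) : algC := a%:R - gam g.
Definition mm (k n : nat) : algC := jj k + 1 + n%:R.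

(* A vector is given by its coefficient function v a n on |mu_a> (x) |m_n>. *)
Definition vec := nat -> nat -> algC.

(* Elements of F_gamma (x) D^+_j: a <= g and finitely many n. *)
Definition in_tensor (g : nat) (v : vec) : Prop :=
  exists N : nat, forall a n, (g < a)%N \/ (N <= n)%N -> v a n = 0.

(* V_{j+1+gamma}: span of |mu> (x) |j+1+gamma-mu>, i.e. n = g - a. *)
Definition in_V (g : nat) (v : vec) : Prop :=
  forall a n, (g < a)%N \/ n <> (g - a)%N -> v a n = 0.

(* Generators acting on the tensor product (coefficient form of
   J (x) 1 + 1 (x) J applied to a finite linear combination of basis vectors). *)
Definition J0 (g k : nat) (v : vec) : vec :=
  fun a n => (mu g a + mm k n) * v a n.
Definition Jp (g k : nat) (v : vec) : vec :=
  fun a n =>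
    (if a is a'.+1 then Gp (gam g) (mu g a') * v a' n else 0)
  + (if n is n'.+1 then Gp (jj k) (mm k n') * v a n' else 0).
Definition Jm (g k : nat) (v : vec) : vec :=
  fun a n => Gm (gam g) (mu g a.+1) * v a.+1 n + Gm (jj k) (mm k n.+1) * v a n.+1.

Definition Cas (g k : nat) (v : vec) : vec :=
  fun a n => - J0 g k (fun a' n' => J0 g k v a' n' - v a' n') a n
             + Jp g k (Jm g k v) a n.

Definition diagonalisable_on (W : vec -> Prop) (T : vec -> vec) : Prop :=
  forall v, W v -> exists (r : nat) (lam : 'I_r -> algC) (e : 'I_r -> vec),
    (forall i, W (e i) /\ forall a n, T (e i) a n = lam i * e i a n) /\
    (forall a n, v a n = \sum_(i < r) e i a n).

(* On V the Casimir, written in the basis |mu_a> (x) |j, j+1+gamma-mu_a> rescaled by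
   products of the off-diagonal coefficients Gp Gm, becomes c + T with c a constant and
   T tridiagonal with unit subdiagonal; its superdiagonal vanishes only in the last row.
   T kills an explicit vector omega (qker), and T u = omega is solvable (u = qpre)
   because the left kernel vector rho (qlker) of T is orthogonal to omega: rho_a omega_a
   is (-1)^a binom(2 gamma, a) times a polynomial in a of degree 2j+1 < 2 gamma, so their
   pairing is a vanishing finite difference. Hence (Q - c) u = omega <> 0 and
   (Q - c) omega = 0, a Jordan chain that no finite sum of eigenvectors can carry. *)

From mathcomp Require Import all_boot all_order all_algebra all_field.
From mathcomp Require Import ring zify.
Set Implicit Arguments. Unset Strict Implicit. Unset Printing Implicit Defensive.
Import Order.TTheory GRing.Theory Num.Theory.
Local Open Scope ring_scope.

Definition lincomb r (f : 'I_r -> algC) (e : 'I_r -> vec) : vec :=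
  fun a n => \sum_(i < r) f i * e i a n.

Lemma sum_ord_recr_last0 (R : zmodType) r (F : 'I_r.+1 -> R) :
  F ord_max = 0 -> \sum_(i < r.+1) F i = \sum_(i < r) F (widen_ord (leqnSn r) i).
Proof. by move=> F0; rewrite big_ord_recr /= F0 addr0. Qed.

Section JordanChain.

Variable T : vec -> vec.
Hypothesis T_ext : forall u v, u =2 v -> T u =2 T v.
Hypothesis T_lincomb : forall r (f : 'I_r -> algC) (e : 'I_r -> vec),
  T (lincomb f e) =2 lincomb f (fun i => T (e i)).

Lemma T_eq0 u : u =2 (fun _ _ => 0) -> T u =2 (fun _ _ => 0).
Proof.
move=> u0 a n; rewrite (T_ext (v := lincomb (fun _ : 'I_0 => 0) (fun _ => u))).
  by rewrite T_lincomb /lincomb big_ord0.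
by move=> a' n'; rewrite u0 /lincomb big_ord0.
Qed.

Lemma lincomb_eigen_sqr_eq0 r (lam : 'I_r -> algC) (e : 'I_r -> vec) f c :
  (forall i, T (e i) =2 (fun a n => lam i * e i a n)) ->
  lincomb (fun i => f i * (lam i - c) ^+ 2) e =2 (fun _ _ => 0) ->
  lincomb (fun i => f i * (lam i - c)) e =2 (fun _ _ => 0).
Proof.
elim: r lam e f => [|r IH] lam e f eig_e sqr_eq0 a n; first by rewrite /lincomb big_ord0.
pose widen (i : 'I_r) := widen_ord (leqnSn r) i.
have IH_last f' : lincomb (fun i => f' i * (lam i - c) ^+ 2) e =2 (fun _ _ => 0) ->
    f' ord_max * (lam ord_max - c) = 0 ->
    lincomb (fun i => f' i * (lam i - c)) e =2 (fun _ _ => 0).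
  move=> sqr_eq0' last0 a' n'; rewrite /lincomb sum_ord_recr_last0 ?last0 ?mul0r //.
  apply: (IH (fun i => lam (widen i)) (fun i => e (widen i)) (fun i => f' (widen i))) => // a2 n2.
  by rewrite -(sqr_eq0' a2 n2) /lincomb sum_ord_recr_last0 // expr2 mulrA last0 !mul0r.
(* Applying T - lam_r removes the last eigenvector, so induction applies twice. *)
set l := lam ord_max.
have sqr_shift_eq0 :
    lincomb (fun i => f i * (lam i - l) * (lam i - c) ^+ 2) e =2 (fun _ _ => 0).
  move=> a' n'.
  transitivity (T (lincomb (fun i => f i * (lam i - c) ^+ 2) e) a' n' -
                l * lincomb (fun i => f i * (lam i - c) ^+ 2) e a' n').
    rewrite T_lincomb /lincomb mulr_sumr -sumrB; apply: eq_bigr => i _.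
    by rewrite eig_e; ring.
  by rewrite sqr_eq0 mulr0 subr0 T_eq0.
have shift_eq0 : lincomb (fun i => f i * (lam i - l) * (lam i - c)) e =2 (fun _ _ => 0).
  by apply: IH_last => //; rewrite /l subrr mulr0 mul0r.
have [l_c | l_neq_c] := eqVneq l c.
  by apply: IH_last => //; rewrite -/l l_c subrr mulr0.
apply/(mulfI (_ : l - c != 0)); first by rewrite subr_eq0.
rewrite mulr0 -(subrr (0 : algC)) -{1}(sqr_eq0 a n) -(shift_eq0 a n).
by rewrite /lincomb mulr_sumr -sumrB; apply: eq_bigr => i _; ring.
Qed.

Lemma jordan_chain_not_diagonalisable (W : vec -> Prop) u w c a0 n0 :
  W u -> T u =2 (fun a n => c * u a n + w a n) -> T w =2 (fun a n => c * w a n) ->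
  w a0 n0 != 0 -> ~ diagonalisable_on W T.
Proof.
move=> Wu Tu Tw w0 /(_ u Wu) [r [lam [e [eig_e u_sum]]]].
have eig i : T (e i) =2 (fun a n => lam i * e i a n) by case: (eig_e i).
have u_lincomb : u =2 lincomb (fun=> 1) e.
  by move=> a n; rewrite u_sum /lincomb; apply: eq_bigr => i _; rewrite mul1r.
have w_lincomb : w =2 lincomb (fun i => 1 * (lam i - c)) e.
  move=> a n; have -> : w a n = T u a n - c * u a n by rewrite Tu; ring.
  rewrite (T_ext u_lincomb) T_lincomb u_lincomb /lincomb mulr_sumr -sumrB.
  by apply: eq_bigr => i _; rewrite eig; ring.
have /(lincomb_eigen_sqr_eq0 eig) w_eq0 :
    lincomb (fun i => 1 * (lam i - c) ^+ 2) e =2 (fun _ _ => 0).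
  move=> a n; rewrite -(subrr (c * w a n)) -{1}Tw (T_ext w_lincomb) T_lincomb.
  rewrite w_lincomb /lincomb mulr_sumr -sumrB; apply: eq_bigr => i _.
  by rewrite eig; ring.
by move: w0; rewrite w_lincomb w_eq0 eqxx.
Qed.

End JordanChain.

Lemma Cas_ext g k u v : u =2 v -> Cas g k u =2 Cas g k v.
Proof. by move=> uv [|a] [|n]; rewrite /Cas /J0 /Jp /Jm !uv. Qed.

Lemma Cas_lincomb g k r (f : 'I_r -> algC) (e : 'I_r -> vec) :
  Cas g k (lincomb f e) =2 lincomb f (fun i => Cas g k (e i)).
Proof.
have Cas0 : Cas g k (fun _ _ => 0) =2 (fun _ _ => 0).
  by move=> [|a] [|n]; rewrite /Cas /J0 /Jp /Jm; ring.
have Cas_affine s u v : Cas g k (fun a n => s * u a n + v a n) =2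
    (fun a n => s * Cas g k u a n + Cas g k v a n).
  by move=> [|a] [|n]; rewrite /Cas /J0 /Jp /Jm; ring.
elim: r f e => [|r IH] f e a n.
  by rewrite /lincomb big_ord0 -(Cas0 a n); apply: Cas_ext => a' n'; rewrite big_ord0.
pose widen (i : 'I_r) := widen_ord (leqnSn r) i.
rewrite (@Cas_ext g k _ (fun a n => f ord_max * e ord_max a n +
                                lincomb (f \o widen) (e \o widen) a n)); last first.
  by move=> a' n'; rewrite /lincomb big_ord_recr addrC.
by rewrite Cas_affine IH /lincomb [RHS]big_ord_recr addrC.
Qed.

Section Tridiagonal.

Variables (R : comPzRingType) (E P : nat -> R).

Definition tridiag (z : nat -> R) a :=
  E a * z a + (if a is a'.+1 then z a' else 0) + P a * z a.+1.

Definition tridiag_adj (r : nat -> R) a :=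
  r a.+1 + E a * r a + (if a is a'.+1 then P a' * r a' else 0).

Lemma sum_mul_tridiag (r z : nat -> R) N :
  \sum_(a < N.+1) r a * tridiag z a =
  \sum_(a < N.+1) tridiag_adj r a * z a + r N * P N * z N.+1 - r N.+1 * z N.
Proof.
elim: N => [|N IH]; first by rewrite !big_ord1 /tridiag /tridiag_adj /=; ring.
by rewrite big_ord_recr IH [in RHS]big_ord_recr /tridiag /tridiag_adj /=; ring.
Qed.

End Tridiagonal.

Section RisingFactorial.

Variable R : comPzRingType.

Definition rising (x : R) k := \prod_(i < k) (x + i%:R).

Lemma risingSr x k : rising x k.+1 = rising x k * (x + k%:R).
Proof. by rewrite /rising big_ord_recr. Qed.

Lemma risingSl x k : rising x k.+1 = x * rising (x + 1) k.
Proof.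
rewrite /rising big_ord_recl addr0; congr (_ * _); apply: eq_bigr => i _.
by rewrite lift0 -natr1; ring.
Qed.

Lemma rising_diff x k : rising (x + 1) k.+1 - rising x k.+1 = k.+1%:R * rising (x + 1) k.
Proof. by rewrite risingSr risingSl -natr1; ring. Qed.

Lemma sum_binomial_diff (F : nat -> R) n :
  \sum_(b < n.+2) (-1) ^+ b * 'C(n.+1, b)%:R * F b =
  \sum_(b < n.+1) (-1) ^+ b * 'C(n, b)%:R * (F b - F b.+1).
Proof.
have -> : \sum_(b < n.+1) (-1) ^+ b * 'C(n, b)%:R * (F b - F b.+1) =
    \sum_(b < n.+2) (-1) ^+ b * 'C(n, b)%:R * F b -
    \sum_(b < n.+1) (-1) ^+ b * 'C(n, b)%:R * F b.+1.
  rewrite [in RHS]big_ord_recr /= bin_small // mulr0 mul0r addr0 -sumrB.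
  by apply: eq_bigr => b _; ring.
rewrite !(big_ord_recl n.+1) -addrA -sumrB !bin0; congr (_ + _).
by apply: eq_bigr => b _; rewrite lift0 binS natrD exprS; ring.
Qed.

Lemma sum_binomial_rising x n k : (k < n)%N ->
  \sum_(b < n.+1) (-1) ^+ b * 'C(n, b)%:R * rising (x - b%:R) k = 0.
Proof.
elim: n k => [//|n IH] [_|k lt_k_n];
  rewrite (sum_binomial_diff (fun b => rising (x - b%:R) _)).
  by rewrite big1 // => b _; rewrite /rising !big_ord0 subrr mulr0.
rewrite (eq_bigr (fun b : 'I_n.+1 =>
  k.+1%:R * ((-1) ^+ b * 'C(n, b)%:R * rising (x - b%:R) k))).
  by rewrite -mulr_sumr IH ?mulr0.
move=> b _; have -> : x - b%:R = x - b.+1%:R + 1 by rewrite -natr1; ring.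
by rewrite rising_diff; ring.
Qed.

End RisingFactorial.

Lemma Gp_mul_Gm (x y : algC) : Gp x y * Gm x (y + 1) = - ((x - y) * (x + y + 1)).
Proof.
rewrite /Gp /Gm; have -> : x - (y + 1) + 1 = x - y by ring.
have -> : x + (y + 1) = x + y + 1 by ring.
transitivity ('i ^+ 2 * sqrtC (x - y) ^+ 2 * sqrtC (x + y + 1) ^+ 2); first by ring.
by rewrite !sqrtCK sqrCi; ring.
Qed.

Lemma Gp_mul_Gm_r (x y t : algC) :
  Gp x y * (Gm x (y + 1) * t) = - ((x - y) * (x + y + 1)) * t.
Proof. by rewrite mulrA Gp_mul_Gm. Qed.

Lemma muS g a : mu g a.+1 = mu g a + 1.
Proof. by rewrite /mu -natr1; ring. Qed.

Lemma mmS k n : mm k n.+1 = mm k n + 1.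
Proof. by rewrite /mm -natr1; ring. Qed.

Definition antidiag g (x : nat -> algC) : vec :=
  fun a n => if (a + n == g)%N then x a else 0.

Fixpoint rescale g k a : algC :=
  if a is a'.+1 then Gp (gam g) (mu g a') * Gm (jj k) (mm k (g - a')) * rescale g k a'
  else 1.

Definition Qconst g k : algC := - ((g%:R - k%:R + 1) * (g%:R - k%:R - 1)) / 4.
Definition Qdiag g k a : algC :=
  - ((g%:R - a%:R + 1) * a%:R) + (g%:R - a%:R) * (g%:R + k%:R - a%:R) - g%:R * k%:R.
Definition Qsup g k a : algC :=
  - ((g%:R - a%:R) ^+ 2 * (a%:R + 1) * (g%:R + k%:R - a%:R)).
Definition Qtri g k := tridiag (Qdiag g k) (Qsup g k).

Lemma Cas_antidiag_rescale g k z :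
  Cas g k (antidiag g (fun b => rescale g k b * z b)) =2
  antidiag g (fun b => rescale g k b * (Qconst g k * z b + Qtri g k z b)).
Proof.
(* Groups each Gp with the Gm it cancels against via Gp_mul_Gm. *)
have pair_up (A1 B1 A2 B2 Y X : algC) :
  A1 * (B2 * (A2 * B1 * Y * X)) = (A1 * B1) * (A2 * B2) * (Y * X) by ring.
move=> a n; rewrite /Cas /J0 /Jp /Jm /antidiag /Qtri /tridiag.
case: a => [|a]; case: n => [|n]; rewrite /= ?addSn ?addnS ?add0n ?addn0;
  case: eqP => [<-|_]; try ring.
- by rewrite /Qdiag /Qsup /Qconst /mu /mm /gam /jj; field.
- rewrite subn0 !mulrDr (pair_up (Gp (jj k) (mm k n))) !muS !mmS.
  rewrite ?Gp_mul_Gm_r !Gp_mul_Gm.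
  by rewrite /Qdiag /Qsup /Qconst /mu /mm /gam /jj -!natr1; field.
- rewrite subSn // subnn !mulrDr !muS !mmS !Gp_mul_Gm_r.
  by rewrite /Qdiag /Qsup /Qconst /mu /mm /gam /jj -!natr1; field.
- rewrite !subSS -!addnS !addKn !mulrDr (pair_up (Gp (jj k) (mm k n))) !muS !mmS.
  rewrite ?Gp_mul_Gm_r !Gp_mul_Gm.
  by rewrite /Qdiag /Qsup /Qconst /mu /mm /gam /jj natrD -!natr1; field.
Qed.

Lemma natr_sub_neq0 (m n : nat) : (m < n)%N -> (n%:R - m%:R : algC) != 0.
Proof. by move=> lt_mn; rewrite subr_eq0 eqr_nat neq_ltn lt_mn orbT. Qed.

Lemma Qsup_neq0 g k a : (a < g)%N -> Qsup g k a != 0.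
Proof.
move=> lt_ag; rewrite /Qsup oppr_eq0 !mulf_neq0 ?expf_neq0 ?natr1 ?pnatr_eq0 //;
  by rewrite -?natrD natr_sub_neq0 ?ltn_addr.
Qed.

Lemma Qsup_last g k : Qsup g k g = 0.
Proof. by rewrite /Qsup subrr; ring. Qed.

Fixpoint qker g k a : algC :=
  if a is a'.+1 then qker g k a' / ((a'%:R + 1) * (g%:R + k%:R - a'%:R)) else 1.

Fixpoint qlker g a : algC :=
  if a is a'.+1 then - (g%:R - a'%:R) ^+ 2 * qlker g a' else 1.

Fixpoint qpre g k a : algC :=
  if a is a'.+1 then
    (qker g k a' - (if a' is a''.+1 then qpre g k a'' else 0) - Qdiag g k a' * qpre g k a')
    / Qsup g k a'
  else 0.

Lemma qker_ratio_neq0 g k a : (a < g + k)%N ->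
  (a%:R + 1) * (g%:R + k%:R - a%:R) != 0 :> algC.
Proof. by move=> lt_a; rewrite mulf_neq0 ?natr1 ?pnatr_eq0 // -natrD natr_sub_neq0. Qed.

Lemma qker_pred g k a : (a < g + k)%N ->
  qker g k a = (a%:R + 1) * (g%:R + k%:R - a%:R) * qker g k a.+1.
Proof. by move/qker_ratio_neq0 => ratio_neq0; rewrite /= mulrC divfK. Qed.

Lemma Qsup_mul_qker g k a : (a <= g)%N ->
  Qsup g k a * qker g k a.+1 = - (g%:R - a%:R) ^+ 2 * qker g k a.
Proof.
move=> le_ag; case: (ltnP a (g + k)) => [lt_a | ge_a].
  by rewrite [in RHS]qker_pred // /Qsup; ring.
have -> : a = g by lia.
by rewrite Qsup_last subrr; ring.
Qed.

Lemma Qtri_ker g k a : (a <= g)%N -> Qtri g k (qker g k) a = 0.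
Proof.
move=> le_ag; rewrite /Qtri /tridiag Qsup_mul_qker //.
case: a le_ag => [|a] le_ag; first by rewrite /Qdiag /= !subr0; ring.
by rewrite (qker_pred (_ : (a < g + k)%N)) /Qdiag -?natr1; [ring | lia].
Qed.

Lemma qlker_adj g k a : tridiag_adj (Qdiag g k) (Qsup g k) (qlker g) a = 0.
Proof. by case: a => [|a]; rewrite /tridiag_adj /Qdiag /Qsup /= -?natr1; ring. Qed.

Lemma sum_qlker_Qtri g k z : \sum_(a < g.+1) qlker g a * Qtri g k z a = 0.
Proof.
rewrite sum_mul_tridiag big1 => [|a _]; last by rewrite qlker_adj mul0r.
by rewrite Qsup_last /= subrr; ring.
Qed.

Lemma qlker_neq0 g a : (a <= g)%N -> qlker g a != 0.
Proof.
elim: a => [|a IH] le_ag /=; first exact: oner_neq0.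
by rewrite mulf_neq0 ?IH 1?ltnW // oppr_eq0 expf_neq0 // natr_sub_neq0.
Qed.

Lemma qlker_qker_rising g k b : (b <= g)%N ->
  qlker g b * qker g k b * rising g.+1%:R k =
  (-1) ^+ b * 'C(g, b)%:R * rising (g.+1%:R - b%:R) k.
Proof.
elim: b => [|b IH] le_bg; first by rewrite /= bin0 subr0 expr0 !mul1r.
have lt_bg : (b < g)%N by [].
have shift : rising (g.+1%:R - b.+1%:R : algC) k * (g%:R + k%:R - b%:R) =
             (g%:R - b%:R) * rising (g.+1%:R - b%:R) k.
  have -> : g.+1%:R - b%:R = g%:R - b%:R + 1 :> algC by rewrite -!natr1; ring.
  have -> : g.+1%:R - b.+1%:R = g%:R - b%:R :> algC by rewrite -!natr1; ring.
  by rewrite -risingSl risingSr addrAC.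
have binS_mul : ('C(g, b.+1)%:R * (b%:R + 1) : algC) = 'C(g, b)%:R * (g%:R - b%:R).
  by rewrite natr1 -natrM mulnC mul_bin_left natrM natrB 1?ltnW // mulrC.
have lt_b : (b < g + k)%N by rewrite ltn_addr.
rewrite (qker_pred lt_b) in IH; apply: (mulIf (qker_ratio_neq0 lt_b)).
transitivity (- (g%:R - b%:R) ^+ 2 *
  (qlker g b * ((b%:R + 1) * (g%:R + k%:R - b%:R) * qker g k b.+1) *
   rising (g.+1%:R : algC) k)).
  by rewrite [qlker _ b.+1]/=; ring.
rewrite IH 1?ltnW // [(-1) ^+ b.+1]exprS.
transitivity (- (-1) ^+ b * ('C(g, b.+1)%:R * (b%:R + 1)) *
  (rising (g.+1%:R - b.+1%:R : algC) k * (g%:R + k%:R - b%:R))); last by ring.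
by rewrite binS_mul shift; ring.
Qed.

Lemma sum_qlker_qker g k : (k < g)%N -> \sum_(a < g.+1) qlker g a * qker g k a = 0.
Proof.
move=> lt_kg; have rising_neq0 : rising (g.+1%:R : algC) k != 0.
  by apply/prodf_neq0 => i _; rewrite -natrD pnatr_eq0 addSn.
apply: (mulIf rising_neq0); rewrite mul0r mulr_suml.
rewrite (eq_bigr (fun a : 'I_g.+1 => (-1) ^+ a * 'C(g, a)%:R * rising (g.+1%:R - a%:R) k)).
  exact: sum_binomial_rising.
by move=> a _; rewrite qlker_qker_rising // -ltnS.
Qed.

Lemma Qtri_pre g k a : (k < g)%N -> (a <= g)%N -> Qtri g k (qpre g k) a = qker g k a.
Proof.
move=> lt_kg; have below b : (b < g)%N -> Qtri g k (qpre g k) b = qker g k b.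
  move/(Qsup_neq0 k) => sup_neq0.
  rewrite /Qtri /tridiag /= [Qsup g k b * _]mulrC divfK //.
  by case: b {sup_neq0} => [|b]; ring.
rewrite leq_eqVlt => /orP [/eqP -> | ]; last exact: below.
(* The last row follows: qlker annihilates the range of Qtri and is orthogonal to qker. *)
have sum_below : \sum_(a < g) qlker g a * Qtri g k (qpre g k) a =
                 \sum_(a < g) qlker g a * qker g k a.
  by apply: eq_bigr => b _; rewrite below.
apply: (mulfI (qlker_neq0 (leqnn g))).
have := sum_qlker_Qtri g k (qpre g k); have := sum_qlker_qker lt_kg.
rewrite !big_ord_recr /= sum_below => sum_ker sum_tri.
by apply: (addrI (\sum_(b < g) qlker g b * qker g k b)); rewrite sum_ker sum_tri.
Qed.

Definition casimir_eigvec g k := antidiag g (fun b => rescale g k b * qker g k b).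
Definition casimir_gen_eigvec g k := antidiag g (fun b => rescale g k b * qpre g k b).

Lemma Cas_eigvec g k :
  Cas g k (casimir_eigvec g k) =2 (fun a n => Qconst g k * casimir_eigvec g k a n).
Proof.
move=> a n; rewrite Cas_antidiag_rescale /casimir_eigvec /antidiag.
case: eqP => [<-|_]; last by rewrite mulr0.
by rewrite Qtri_ker ?leq_addr // addr0 mulrCA.
Qed.

Lemma Cas_gen_eigvec g k : (k < g)%N -> Cas g k (casimir_gen_eigvec g k) =2
  (fun a n => Qconst g k * casimir_gen_eigvec g k a n + casimir_eigvec g k a n).
Proof.
move=> lt_kg a n.
rewrite Cas_antidiag_rescale /casimir_gen_eigvec /casimir_eigvec /antidiag.
case: eqP => [a_n_g|_]; last by rewrite mulr0 addr0.
by rewrite Qtri_pre // -?a_n_g ?leq_addr //; ring.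
Qed.

Theorem mainTheorem6 (g k : nat) (hg : (1 <= g)%N) (hjg : (k + 1 <= g)%N) :
  ~ diagonalisable_on (in_V g) (Cas g k) /\
  ~ diagonalisable_on (in_tensor g) (Cas g k).
Proof.
have lt_kg : (k < g)%N by rewrite -addn1.
have eigvec_neq0 : casimir_eigvec g k 0 g != 0.
  by rewrite /casimir_eigvec /antidiag add0n eqxx mulr1 oner_neq0.
have not_diag W : W (casimir_gen_eigvec g k) -> ~ diagonalisable_on W (Cas g k).
  move=> W_gen; exact: (jordan_chain_not_diagonalisable (@Cas_ext g k) (@Cas_lincomb g k)
    W_gen (Cas_gen_eigvec lt_kg) (@Cas_eigvec g k) eigvec_neq0).
split; apply: not_diag; last exists g.+1;
  by move=> a n; rewrite /casimir_gen_eigvec /antidiag; case: eqP => //; lia.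
Qed.
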